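(* Let $0<b<1$. For every instance, the naive future-biased agent with bias $b$ incurs cost $C_f(s)\le \frac{1}{b}C_o(s)$; that is, its cost ratio is at most $1/b$.
   Context: An instance is a finite directed acyclic graph $G=(V,E)$ with nonnegative edge costs $c(u,v)$, start node $s$ and target node $t$, where $t$ is the unique node with no outgoing edges; $C_o(u)$ is the minimum cost of a $u$–$t$ path. The naive agent with bias $b$ (called future-biased when $b<1$): $C_f(t)=0$, and for $u\ne t$, $S_f(u)\in\arg\min_{v:(u,v)\in E}(b\,c(u,v)+C_o(v))$, $C_f(u)=c(u,S_f(u))+C_f(S_f(u))$; $C_f(s)$ is the cost it incurs traveling from $s$ to $t$, and its cost ratio is $C_f(s)/C_o(s)$. *)

From mathcomp Require Import all_boot all_order all_algebra.
Set Implicit Arguments. Unset Strict Implicit. Unset Printing Implicit Defensive.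
Import Order.TTheory GRing.Theory Num.Theory.
Local Open Scope ring_scope.

(* A graph on a finite vertex type V is given by an edge relation E : rel V.
   A walk from x is a sequence p with [path E x p]; it ends at [last x p]. *)

Definition acyclic (V : finType) (E : rel V) : Prop :=
  forall (x : V) (p : seq V), p != [::] -> path E x p -> last x p != x.

Definition unique_sink (V : finType) (E : rel V) (t : V) : Prop :=
  (forall v, ~~ E t v) /\ (forall u, u != t -> exists v, E u v).

Fixpoint pcost (R : numDomainType) (V : Type) (c : V -> V -> R) (x : V)
    (p : seq V) : R :=
  match p with
  | [::] => 0
  | y :: p' => c x y + pcost c y p'
  end.

Definition is_opt_cost (R : realFieldType) (V : finType) (E : rel V)
    (c : V -> V -> R) (t : V) (Co : V -> R) : Prop :=
  forall u : V,
    (exists p, [/\ path E u p, last u p = t & pcost c u p = Co u]) /\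
    (forall p, path E u p -> last u p = t -> Co u <= pcost c u p).

Definition is_naive_choice (R : realFieldType) (V : finType) (E : rel V)
    (c : V -> V -> R) (t : V) (b : R) (Co : V -> R) (Sf : V -> V) : Prop :=
  forall u : V, u != t ->
    E u (Sf u) /\
    (forall v, E u v -> b * c u (Sf u) + Co (Sf u) <= b * c u v + Co v).

Definition is_agent_cost (R : realFieldType) (V : finType)
    (c : V -> V -> R) (t : V) (Sf : V -> V) (Cf : V -> R) : Prop :=
  Cf t = 0 /\ (forall u : V, u != t -> Cf u = c u (Sf u) + Cf (Sf u)).

From mathcomp Require Import all_boot all_order all_algebra.
From mathcomp Require Import zify.
Set Implicit Arguments. Unset Strict Implicit. Unset Printing Implicit Defensive.
Import Order.TTheory GRing.Theory Num.Theory.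
Local Open Scope ring_scope.

(* At every vertex u <> t the agent's step decreases the optimal cost by at
   least b times the cost it pays: comparing its choice with the first edge
   (u, w) of an optimal path gives
   b c(u, Sf u) + Co(Sf u) <= b c(u, w) + Co w <= c(u, w) + Co w = Co u.
   Telescoping along the agent's walk, which reaches t because the graph is
   finite and acyclic, yields b Cf(s) <= Co(s). *)

Section AgentWalk.

Variables (V : finType) (E : rel V) (t : V) (Sf : V -> V).
Hypothesis E_step : forall u, u != t -> E u (Sf u).

Lemma path_traject_step m x :
  (forall k, (k < m)%N -> iter k Sf x != t) ->
  path E x (traject Sf (Sf x) m).
Proof.
elim: m x => [|m IHm] x not_t //=.
rewrite E_step ?(not_t 0%N) //=.
by apply: IHm => k lt_km; rewrite -iterSr; apply: not_t.
Qed.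

Lemma iter_step_reaches_sink x : acyclic E -> exists n, iter n Sf x = t.
Proof.
move=> acyc.
have [/existsP[n /eqP <-]|] := boolP [exists n : 'I_#|V|.+1, iter n Sf x == t].
  by exists n.
rewrite negb_exists => /forallP not_t.
have {}not_t k : (k <= #|V|)%N -> iter k Sf x != t.
  by move=> le_kV; apply: (not_t (Ordinal (le_kV : (k < #|V|.+1)%N))).
(* Pigeonhole: two of the first #|V|.+1 iterates coincide, and the walk
   between them avoids t, so it is a cycle. *)
have : ~~ uniq (traject Sf x #|V|.+1).
  apply/negP => /card_uniqP card_traj.
  have := max_card (mem (traject Sf x #|V|.+1)).
  by rewrite card_traj size_traject ltnn.
rewrite looping_uniq negbK.
case/trajectP => i lt_iV iter_V.
pose p := traject Sf (Sf (iter i Sf x)) (#|V| - i).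
have p_path : path E (iter i Sf x) p.
  apply: path_traject_step => k lt_k; rewrite -iterD; apply: not_t; lia.
have p_nil : p != [::] by rewrite -size_eq0 size_traject; lia.
have := acyc _ _ p_nil p_path.
by rewrite last_traject -iterD subnK ?(ltnW lt_iV) // iter_V eqxx.
Qed.

End AgentWalk.

Section CostBounds.

Variables (R : realFieldType) (V : finType) (E : rel V) (c : V -> V -> R).
Variables (t : V) (Co : V -> R).
Hypothesis Co_opt : is_opt_cost E c t Co.

Lemma opt_cost_sink : (forall v, ~~ E t v) -> Co t = 0.
Proof.
move=> no_out; have [[[|y p] [p_path _ <-]] _] := Co_opt t => //=.
by move: p_path; rewrite /= (negbTE (no_out y)).
Qed.

Lemma opt_cost_first_edge u :
  u != t -> exists2 w, E u w & c u w + Co w <= Co u.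
Proof.
move=> ut; have [[[|w p] [/= p_path p_last <-]] _] := Co_opt u.
  by move: ut; rewrite -p_last /= eqxx.
case/andP: p_path => Euw w_path; exists w => //.
by rewrite lerD2l; apply: (proj2 (Co_opt w)).
Qed.

Lemma naive_step_le_opt_cost (b : R) (Sf : V -> V) u :
  0 <= b <= 1 -> (forall u v, E u v -> 0 <= c u v) ->
  is_naive_choice E c t b Co Sf -> u != t ->
  b * c u (Sf u) + Co (Sf u) <= Co u.
Proof.
case/andP=> b_ge0 b_le1 c_ge0 choice ut.
have [w Euw opt_w] := opt_cost_first_edge ut.
apply: le_trans (proj2 (choice u ut) w Euw) (le_trans _ opt_w).
by rewrite lerD2r ler_piMl ?c_ge0.
Qed.

End CostBounds.

Lemma agent_cost_le_potential (R : realFieldType) (V : finType)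
    (c : V -> V -> R) (t : V) (b : R) (Sf : V -> V) (Cf Phi : V -> R) :
  is_agent_cost c t Sf Cf -> Phi t = 0 ->
  (forall u, u != t -> b * c u (Sf u) + Phi (Sf u) <= Phi u) ->
  forall n u, iter n Sf u = t -> b * Cf u <= Phi u.
Proof.
case=> Cf_t Cf_step Phi_t Phi_step; elim=> [|n IHn] u.
  by move=> /= ->; rewrite Cf_t Phi_t mulr0.
rewrite iterSr => reach; have [->|ut] := eqVneq u t.
  by rewrite Cf_t Phi_t mulr0.
rewrite Cf_step // mulrDr; apply: le_trans (Phi_step u ut).
by rewrite lerD2l IHn.
Qed.

Theorem claim7 (R : realFieldType) (V : finType) (E : rel V)
    (c : V -> V -> R) (s t : V) (b : R)
    (Co : V -> R) (Sf : V -> V) (Cf : V -> R) :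
  0 < b -> b < 1 ->
  acyclic E ->
  unique_sink E t ->
  (forall u v, E u v -> 0 <= c u v) ->
  is_opt_cost E c t Co ->
  is_naive_choice E c t b Co Sf ->
  is_agent_cost c t Sf Cf ->
  Cf s <= Co s / b.
Proof.
move=> b_gt0 b_lt1 acyc [no_out _] c_ge0 Co_opt choice Cf_agent.
have b01 : 0 <= b <= 1 by rewrite ltW // ltW.
have E_step u : u != t -> E u (Sf u) by case/choice.
have [n reach] := iter_step_reaches_sink E_step s acyc.
have Co_step u (ut : u != t) : b * c u (Sf u) + Co (Sf u) <= Co u.
  exact: (naive_step_le_opt_cost Co_opt b01 c_ge0 choice ut).
rewrite ler_pdivlMr // mulrC.
exact: agent_cost_le_potential Cf_agent (opt_cost_sink Co_opt no_out) Co_step _ _ reach.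
Qed.
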